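(* Let $M\models\mathrm{AA}$ and let $I\subseteq M$ be a proper cut. Then (i) $I$ is not formula-definable; (ii) if $1\le y$ for every $y\in M\setminus I$, then $M\setminus I$ is not formula-definable.
   Context: Structures are complete metric spaces of diameter at most $1$ in the language $L=\{+,\cdot,\wedge,\vee,0,1\}$ (operations $1$-Lipschitz, $d$ the only relation symbol). Affine formulas are built from $1$ and atomic formulas $d(t_1,t_2)$ using $+$, scalar multiplication by reals, $\sup_x$, $\inf_x$. $\mathrm{AA}$ is the set of all closed affine conditions true in every model of first-order Peano arithmetic (formulated in $L$ with lattice operations min/max and discrete metric). $x\le y$ means $x\wedge y=x$. A cut in $M$ is a nonempty $I\subseteq M$ such that $x\le y\in I$ implies $x\in I$, and $x\in I$ implies $x+1\in I$; it is proper if $I\ne M$. A set $D\subseteq M$ is formula-definable if it is closed and there is an affine formula $\phi(x)$ with parameters from $M$ such that $d(x,D)=\inf_{y\in D}d(x,y)=\phi^M(x)$ for all $x$. *)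

From HB Require Import structures.
From mathcomp Require Import all_boot all_order all_algebra.
From mathcomp Require Import all_classical all_reals.
From mathcomp Require Import Rstruct.
Import Order.TTheory GRing.Theory Num.Theory.
Local Open Scope ring_scope.
Local Open Scope classical_set_scope.

Notation real := Rdefinitions.R.

Record Lpre := {
  car :> Type;
  dist : car -> car -> real;
  ladd : car -> car -> car;
  lmul : car -> car -> car;
  lmeet : car -> car -> car;
  ljoin : car -> car -> car;
  lzero : car;
  lone : car }.

Set Implicit Arguments. Unset Strict Implicit. Unset Printing Implicit Defensive.

Definition lip2 (M : Lpre) (f : M -> M -> M) : Prop :=
  forall x y x' y', dist M (f x y) (f x' y') <= Num.max (dist M x x') (dist M y y').

Definition cauchy (M : Lpre) (u : nat -> M) : Prop :=
  forall e : real, 0 < e -> exists N, forall n m, (N <= n)%N -> (N <= m)%N ->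
    dist M (u n) (u m) < e.

Definition converges_to (M : Lpre) (u : nat -> M) (x : M) : Prop :=
  forall e : real, 0 < e -> exists N, forall n, (N <= n)%N -> dist M (u n) x < e.

Record Lstruct_axioms (M : Lpre) : Prop := {
  ax_inhabited : inhabited M;
  ax_dist_ge0 : forall x y, 0 <= dist M x y;
  ax_dist_le1 : forall x y, dist M x y <= 1;
  ax_dist_eq0 : forall x y, dist M x y = 0 <-> x = y;
  ax_dist_sym : forall x y, dist M x y = dist M y x;
  ax_dist_tri : forall x y z, dist M x z <= dist M x y + dist M y z;
  ax_complete : forall u : nat -> M, cauchy u -> exists x : M, converges_to u x;
  ax_lip_add : lip2 (ladd M);
  ax_lip_mul : lip2 (lmul M);
  ax_lip_meet : lip2 (lmeet M);
  ax_lip_join : lip2 (ljoin M) }.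

Inductive term :=
  | tvar of nat | tzero | tone
  | tadd of term & term | tmul of term & term
  | tmeet of term & term | tjoin of term & term.

Fixpoint teval (M : Lpre) (a : nat -> M) (t : term) : M :=
  match t with
  | tvar n => a n
  | tzero => lzero M
  | tone => lone M
  | tadd t1 t2 => ladd M (teval a t1) (teval a t2)
  | tmul t1 t2 => lmul M (teval a t1) (teval a t2)
  | tmeet t1 t2 => lmeet M (teval a t1) (teval a t2)
  | tjoin t1 t2 => ljoin M (teval a t1) (teval a t2)
  end.

Fixpoint tfree (k : nat) (t : term) : bool :=
  match t with
  | tvar n => n == k
  | tzero | tone => false
  | tadd t1 t2 | tmul t1 t2 | tmeet t1 t2 | tjoin t1 t2 => tfree k t1 || tfree k t2
  end.

Inductive aform :=
  | aone
  | adist of term & term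
  | aplus of aform & aform
  | ascale of real & aform
  | asup of nat & aform
  | ainf of nat & aform.

Fixpoint afree (k : nat) (f : aform) : bool :=
  match f with
  | aone => false
  | adist t1 t2 => tfree k t1 || tfree k t2
  | aplus f1 f2 => afree k f1 || afree k f2
  | ascale _ f1 => afree k f1
  | asup n f1 | ainf n f1 => (n != k) && afree k f1
  end.

Definition closed_aform (f : aform) : Prop := forall k, ~~ afree k f.

Definition upd (T : Type) (a : nat -> T) (n : nat) (x : T) : nat -> T :=
  fun k => if k == n then x else a k.

Fixpoint aeval (M : Lpre) (a : nat -> M) (f : aform) : real :=
  match f with
  | aone => 1
  | adist t1 t2 => dist M (teval a t1) (teval a t2)
  | aplus f1 f2 => aeval a f1 + aeval a f2
  | ascale r f1 => r * aeval a f1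
  | asup n f1 => sup (range (fun x : M => aeval (upd a n x) f1))
  | ainf n f1 => inf (range (fun x : M => aeval (upd a n x) f1))
  end.

Unset Implicit Arguments.
Record PAstr := {
  pcar :> Type;
  padd : pcar -> pcar -> pcar;
  pmul : pcar -> pcar -> pcar;
  pzero : pcar;
  pone : pcar }.

Set Implicit Arguments.

Inductive pterm :=
  | pvar of nat | pz | po | pplus of pterm & pterm | ptimes of pterm & pterm.

Fixpoint pteval (N : PAstr) (a : nat -> N) (t : pterm) : N :=
  match t with
  | pvar n => a n
  | pz => pzero N
  | po => pone N
  | pplus t1 t2 => padd N (pteval a t1) (pteval a t2)
  | ptimes t1 t2 => pmul N (pteval a t1) (pteval a t2)
  end.

Inductive foform :=
  | feq of pterm & pterm
  | fnot of foform
  | fand of foform & foform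
  | fex of nat & foform.

Fixpoint fosat (N : PAstr) (a : nat -> N) (f : foform) : Prop :=
  match f with
  | feq t1 t2 => pteval a t1 = pteval a t2
  | fnot f1 => ~ fosat a f1
  | fand f1 f2 => fosat a f1 /\ fosat a f2
  | fex n f1 => exists x : N, fosat (upd a n x) f1
  end.

Record is_PA (N : PAstr) : Prop := {
  pa_succ_ne0 : forall x, padd N x (pone N) <> pzero N;
  pa_succ_inj : forall x y, padd N x (pone N) = padd N y (pone N) -> x = y;
  pa_add0 : forall x, padd N x (pzero N) = x;
  pa_addS : forall x y, padd N x (padd N y (pone N)) = padd N (padd N x y) (pone N);
  pa_mul0 : forall x, pmul N x (pzero N) = pzero N;
  pa_mulS : forall x y, pmul N x (padd N y (pone N)) = padd N (pmul N x y) x;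
  pa_ind : forall (f : foform) (n : nat) (a : nat -> N),
      fosat (upd a n (pzero N)) f ->
      (forall x, fosat (upd a n x) f -> fosat (upd a n (padd N x (pone N))) f) ->
      forall x, fosat (upd a n x) f }.

Definition pa_le (N : PAstr) (x y : N) : Prop := exists z, padd N x z = y.

(* a model of PA viewed as an L-structure: min/max lattice ops, discrete metric *)
Definition PA_to_L (N : PAstr) : Lpre := {|
  car := N;
  dist := fun x y => if pselect (x = y) then 0 else 1;
  ladd := padd N;
  lmul := pmul N;
  lmeet := fun x y => if pselect (pa_le x y) then x else y;
  ljoin := fun x y => if pselect (pa_le x y) then y else x;
  lzero := pzero N;
  lone := pone N |}.

Definition AA (f : aform) : Prop :=
  closed_aform f /\
  forall N : PAstr, is_PA N -> forall a : nat -> PA_to_L N, 0 <= aeval a f.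

Definition models_AA (M : Lpre) : Prop :=
  forall f, AA f -> forall a : nat -> M, 0 <= aeval a f.

Definition Lle (M : Lpre) (x y : M) : Prop := lmeet M x y = x.

Definition is_cut (M : Lpre) (I : set M) : Prop :=
  I !=set0 /\
  (forall x y, Lle x y -> I y -> I x) /\
  (forall x, I x -> I (ladd M x (lone M))).

Definition proper_cut (M : Lpre) (I : set M) : Prop := is_cut I /\ I != setT.

Definition dist_to_set (M : Lpre) (x : M) (D : set M) : real :=
  inf [set dist M x y | y in D].

Definition metric_closed (M : Lpre) (D : set M) : Prop :=
  forall x, (forall e : real, 0 < e -> exists2 y, D y & dist M x y < e) -> D x.

(* D is formula-definable: closed, and d(x,D) = phi(x) for an affine formula
   phi whose variable 0 is x and whose other free variables are parameters a. *)
Definition formula_definable (M : Lpre) (D : set M) : Prop :=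
  metric_closed D /\
  exists (f : aform) (a : nat -> M), forall x : M, dist_to_set x D = aeval (upd a 0 x) f.

(* If d(x, D) = phi(x) for an affine formula phi, then phi is monotone along x |-> x + 1:
   nonincreasing when D is a cut, which is closed under the 1-Lipschitz successor map, and
   nondecreasing when D is the complement of a cut lying above 1, since then every element of
   D is the successor of an element of D (predecessors exist by completeness) and, by AA, the
   successor does not shrink distances.
   AA contains an affine induction schema forcing a nonincreasing phi to attain its supremum
   at 0. It holds in models of PA, where phi takes finitely many values: either phi increases
   somewhere, by at least the least gap between its values, or first-order induction on its
   sublevel sets bounds it by phi(0).
   For b outside I this gives d(b, I) <= d(0, I) = 0, resp. d(0, M \ I) <= d(b, M \ I) = 0,
   contradicting the closedness of I, resp. M \ I, since 0 lies in I. *)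

From mathcomp Require Import all_boot all_order all_algebra.
From mathcomp Require Import all_classical all_reals.
From mathcomp Require Import Rstruct.
From mathcomp Require Import lra zify.
From Stdlib Require Import Classical.
Import Order.TTheory GRing.Theory Num.Theory.
Local Open Scope ring_scope.
Local Open Scope classical_set_scope.
Set Implicit Arguments. Unset Strict Implicit. Unset Printing Implicit Defensive.

Lemma upd_eq (T : Type) (a : nat -> T) n x : upd a n x n = x.
Proof. by rewrite /upd eqxx. Qed.

Lemma upd_neq (T : Type) (a : nat -> T) n x k : k != n -> upd a n x k = a k.
Proof. by rewrite /upd => /negbTE ->. Qed.

Lemma upd_comm (T : Type) (a : nat -> T) n x m y : n != m ->
  upd (upd a n x) m y = upd (upd a m y) n x.
Proof.
move=> nm; apply: funext => k; rewrite /upd.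
by case: (eqVneq k m) => [->|//]; rewrite eq_sym (negbTE nm).
Qed.

Lemma upd_id (T : Type) (a : nat -> T) n : upd a n (a n) = a.
Proof. by apply: funext => k; rewrite /upd; case: eqP => // ->. Qed.

Fixpoint tvar_bound (t : term) : nat :=
  match t with
  | tvar n => n.+1
  | tzero | tone => 0%N
  | tadd t1 t2 | tmul t1 t2 | tmeet t1 t2 | tjoin t1 t2 =>
      maxn (tvar_bound t1) (tvar_bound t2)
  end.

Fixpoint avar_bound (f : aform) : nat :=
  match f with
  | aone => 0%N
  | adist t1 t2 => maxn (tvar_bound t1) (tvar_bound t2)
  | aplus f1 f2 => maxn (avar_bound f1) (avar_bound f2)
  | ascale _ f1 => avar_bound f1
  | asup n f1 | ainf n f1 => maxn n.+1 (avar_bound f1)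
  end.

Lemma teval_upd_fresh (M : Lpre) (a : nat -> M) X x t : (tvar_bound t <= X)%N ->
  teval (upd a X x) t = teval a t.
Proof.
elim: t => [n|||t1 IH1 t2 IH2|t1 IH1 t2 IH2|t1 IH1 t2 IH2|t1 IH1 t2 IH2] //=;
  try by rewrite geq_max => /andP[h1 h2]; rewrite IH1 ?IH2.
by move=> h; rewrite upd_neq //; apply: contraTneq h => ->; rewrite ltnn.
Qed.

Lemma aeval_upd_fresh (M : Lpre) X x f : (avar_bound f <= X)%N ->
  forall a : nat -> M, aeval (upd a X x) f = aeval a f.
Proof.
elim: f => [|t1 t2|f1 IH1 f2 IH2|r f1 IH1|n f1 IH1|n f1 IH1] /= h a //.
- by move: h; rewrite geq_max => /andP[h1 h2]; rewrite !teval_upd_fresh.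
- by move: h; rewrite geq_max => /andP[h1 h2]; rewrite IH1 ?IH2.
- by rewrite IH1.
- move: h; rewrite geq_max => /andP[h1 h2].
  have nX : X != n by apply: contraTneq h1 => ->; rewrite ltnn.
  suff -> : (fun y => aeval (upd (upd a X x) n y) f1) = (fun y => aeval (upd a n y) f1)
    by [].
  by apply: funext => y; rewrite upd_comm // IH1.
- move: h; rewrite geq_max => /andP[h1 h2].
  have nX : X != n by apply: contraTneq h1 => ->; rewrite ltnn.
  suff -> : (fun y => aeval (upd (upd a X x) n y) f1) = (fun y => aeval (upd a n y) f1)
    by [].
  by apply: funext => y; rewrite upd_comm // IH1.
Qed.

Lemma tvar_bound_notfree t k : (tvar_bound t <= k)%N -> ~~ tfree k t.
Proof.
elim: t => [n|||t1 IH1 t2 IH2|t1 IH1 t2 IH2|t1 IH1 t2 IH2|t1 IH1 t2 IH2] //=;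
  try by rewrite geq_max => /andP[h1 h2]; rewrite negb_or IH1 ?IH2.
by move=> h; apply: contraTN h => /eqP ->; rewrite ltnn.
Qed.

Lemma avar_bound_notfree f k : (avar_bound f <= k)%N -> ~~ afree k f.
Proof.
elim: f => [|t1 t2|f1 IH1 f2 IH2|r f1 IH1|n f1 IH1|n f1 IH1] //=; rewrite ?geq_max.
- by case/andP=> h1 h2; rewrite negb_or !tvar_bound_notfree.
- by case/andP=> h1 h2; rewrite negb_or IH1 ?IH2.
- by case/andP=> h1 h2; rewrite negb_and IH1 ?orbT.
- by case/andP=> h1 h2; rewrite negb_and IH1 ?orbT.
Qed.

(* The affine analogue of the universal closure over the variables 0, ..., n-1. *)
Fixpoint inf_closure (n : nat) (f : aform) : aform :=
  if n is k.+1 then ainf k (inf_closure k f) else f.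

Lemma afree_inf_closure n f k : afree k (inf_closure n f) -> (n <= k)%N && afree k f.
Proof.
elim: n => [|n IH] //= /andP[nk /IH /andP[h1 ->]].
by rewrite andbT ltn_neqAle nk h1.
Qed.

Lemma closed_inf_closure n f : (avar_bound f <= n)%N -> closed_aform (inf_closure n f).
Proof.
move=> h k; apply/negP => /afree_inf_closure /andP[nk].
by apply/negP/avar_bound_notfree/(leq_trans h).
Qed.

Section RangeExtrema.
Variables (T : Type) (g : T -> real).

Lemma le_sup_range b y : (forall z, g z <= b) -> g y <= sup (range g).
Proof. by move=> hb; apply: ub_le_sup; [exists b => _ [z _ <-]|exists y]. Qed.

Lemma sup_range_le b : inhabited T -> (forall z, g z <= b) -> sup (range g) <= b.
Proof. by move=> [y] hb; apply: ge_sup; [exists (g y), y|move=> _ [z _ <-]]. Qed.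

Lemma inf_range_le b y : (forall z, b <= g z) -> inf (range g) <= g y.
Proof. by move=> hb; apply: ge_inf; [exists b => _ [z _ <-]|exists y]. Qed.

Lemma le_inf_range b : inhabited T -> (forall z, b <= g z) -> b <= inf (range g).
Proof. by move=> [y] hb; apply: lb_le_inf; [exists (g y), y|move=> _ [z _ <-]]. Qed.

Lemma sup_range_max y0 : (forall y, g y <= g y0) -> sup (range g) = g y0.
Proof.
move=> h; apply/le_anti/andP; split; last exact: le_sup_range h.
by apply: sup_range_le; first exists.
Qed.

Lemma inf_range_min y0 : (forall y, g y0 <= g y) -> inf (range g) = g y0.
Proof.
move=> h; apply/le_anti/andP; split; first exact: inf_range_le h.
by apply: le_inf_range; first exists.
Qed.

End RangeExtrema.

Fixpoint aval_bound (f : aform) : real :=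
  match f with
  | aone | adist _ _ => 1
  | aplus f1 f2 => aval_bound f1 + aval_bound f2
  | ascale r f1 => `|r| * aval_bound f1
  | asup _ f1 | ainf _ f1 => aval_bound f1
  end.

Section BoundedEvaluation.
Variables (M : Lpre) (M_inhabited : inhabited M)
  (dist_01 : forall x y : M, 0 <= dist M x y <= 1).

Lemma normr_aeval_le f : forall a : nat -> M, `|aeval a f| <= aval_bound f.
Proof.
elim: f => [|t1 t2|f1 IH1 f2 IH2|r f1 IH1|n f1 IH1|n f1 IH1] a /=.
- by rewrite normr1.
- by have /andP[h0 h1] := dist_01 (teval a t1) (teval a t2); rewrite ger0_norm.
- exact: le_trans (ler_normD _ _) (lerD (IH1 a) (IH2 a)).
- by rewrite normrM; apply: ler_wpM2l.
- have [y] := M_inhabited.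
  have hb z : - aval_bound f1 <= aeval (upd a n z) f1 <= aval_bound f1.
    by rewrite -ler_norml.
  rewrite ler_norml sup_range_le ?andbT; last 2 first.
  + by [].
  + by move=> z; case/andP: (hb z).
  apply: le_trans (le_sup_range y (fun z => (andP (hb z)).2)).
  by case/andP: (hb y).
- have [y] := M_inhabited.
  have hb z : - aval_bound f1 <= aeval (upd a n z) f1 <= aval_bound f1.
    by rewrite -ler_norml.
  rewrite ler_norml le_inf_range //=; last by move=> z; case/andP: (hb z).
  apply: le_trans (inf_range_le y (fun z => (andP (hb z)).1)) _.
  by case/andP: (hb y).
Qed.

Lemma aeval_ainf_le (e : nat -> M) n g y : aeval e (ainf n g) <= aeval (upd e n y) g.
Proof.
apply: (inf_range_le (g := fun z => aeval (upd e n z) g) (b := - aval_bound g)) => z.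
by have := normr_aeval_le g (upd e n z); rewrite ler_norml => /andP[].
Qed.

Lemma aeval_asup_ge (e : nat -> M) n g y : aeval (upd e n y) g <= aeval e (asup n g).
Proof.
apply: (le_sup_range (g := fun z => aeval (upd e n z) g) (b := aval_bound g)) => z.
by have := normr_aeval_le g (upd e n z); rewrite ler_norml => /andP[].
Qed.

Lemma aeval_ainf_ge (e : nat -> M) n g b :
  (forall y, b <= aeval (upd e n y) g) -> b <= aeval e (ainf n g).
Proof. exact: le_inf_range. Qed.

Lemma aeval_asup_le (e : nat -> M) n g b :
  (forall y, aeval (upd e n y) g <= b) -> aeval e (asup n g) <= b.
Proof. exact: sup_range_le. Qed.

Lemma inf_closure_ge0 n f : (forall e : nat -> M, 0 <= aeval e f) ->
  forall e : nat -> M, 0 <= aeval e (inf_closure n f).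
Proof. by elim: n => [|n IH] //= h e; apply: aeval_ainf_ge => y; apply: IH. Qed.

Lemma ge0_of_inf_closure n f : (forall e : nat -> M, 0 <= aeval e (inf_closure n f)) ->
  forall e : nat -> M, 0 <= aeval e f.
Proof.
elim: n => [|n IH] //= h; apply: IH => e.
by apply: le_trans (h e) _; rewrite -{2}(upd_id e n); apply: aeval_ainf_le.
Qed.

End BoundedEvaluation.

(** * The affine induction schema *)

(* Positive, hence distinct from the variable 0 bound by the penalized extrema below. *)
Definition fresh_var (phi : aform) : nat := (avar_bound phi).+1.

(* inf_x (phi(x) + C d(x, t)) and sup_x (phi(x) - C d(x, t)); in a discrete structure they
   both equal phi(t) once C exceeds the oscillation of phi. *)
Definition penalized_inf (C : real) (phi : aform) (t : term) : aform :=
  ainf 0 (aplus phi (ascale C (adist (tvar 0) t))).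

Definition penalized_sup (C : real) (phi : aform) (t : term) : aform :=
  asup 0 (aplus phi (ascale (- C) (adist (tvar 0) t))).

Definition succ_increment (C : real) (phi : aform) : aform :=
  let z := tvar (fresh_var phi) in
  asup (fresh_var phi)
    (aplus (penalized_inf C phi (tadd z tone)) (ascale (-1) (penalized_sup C phi z))).

(* The affine induction schema K sup_z (phi(z+1) - phi(z)) + phi(0) - sup_x phi(x) >= 0, with
   the penalized extrema standing in for evaluation at a term: when phi never increases along
   the successor, it says that phi is maximal at 0. *)
Definition induction_form (C K : real) (phi : aform) : aform :=
  aplus (ascale K (succ_increment C phi))
    (aplus (penalized_inf C phi tzero) (ascale (-1) (asup 0 phi))).

Definition induction_axiom (C K : real) (phi : aform) : aform :=
  inf_closure (fresh_var phi).+1 (induction_form C K phi).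

Lemma aeval_fresh_var (M : Lpre) (e : nat -> M) phi x y :
  aeval (upd (upd e (fresh_var phi) x) 0 y) phi = aeval (upd e 0 y) phi.
Proof. by rewrite upd_comm // aeval_upd_fresh. Qed.

Lemma upd_fresh_var (T : Type) (e : nat -> T) phi x y :
  upd (upd e (fresh_var phi) x) 0 y (fresh_var phi) = x.
Proof. by rewrite upd_neq // upd_eq. Qed.

Lemma aeval_induction_form (M : Lpre) (e : nat -> M) C K phi :
  aeval e (induction_form C K phi) = K * aeval e (succ_increment C phi) +
    (aeval e (penalized_inf C phi tzero) - aeval e (asup 0 phi)).
Proof. by rewrite /= mulN1r. Qed.

Definition lipschitz_at0 (M : Lpre) (C : real) (phi : aform) (e : nat -> M) : Prop :=
  forall x y : M, `|aeval (upd e 0 x) phi - aeval (upd e 0 y) phi| <= C * dist M x y.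

Section InductionForm.
Variables (M : Lpre) (M_inhabited : inhabited M)
  (dist_01 : forall x y : M, 0 <= dist M x y <= 1).
Variables (C : real) (phi : aform).
Local Notation at0 e x := (aeval (upd e 0 x) phi).

Section PenalizedExtrema.
Variables (e : nat -> M) (t : term) (p : M) (t_val : forall y, teval (upd e 0 y) t = p).

Lemma penalized_inf_le : dist M p p = 0 -> aeval e (penalized_inf C phi t) <= at0 e p.
Proof.
move=> dpp; apply: le_trans (aeval_ainf_le M_inhabited dist_01 e 0 _ p) _.
by rewrite /= t_val dpp mulr0 addr0.
Qed.

Lemma le_penalized_sup : dist M p p = 0 -> at0 e p <= aeval e (penalized_sup C phi t).
Proof.
move=> dpp; apply: le_trans (aeval_asup_ge M_inhabited dist_01 e 0 _ p).
by rewrite /= t_val dpp mulr0 addr0.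
Qed.

Lemma lipschitz_penalized_inf_ge :
  lipschitz_at0 C phi e -> at0 e p <= aeval e (penalized_inf C phi t).
Proof.
move=> hL; apply: aeval_ainf_ge => // y /=; rewrite t_val.
by have := hL y p; rewrite ler_norml => /andP[h _]; lra.
Qed.

Lemma lipschitz_penalized_sup_le :
  lipschitz_at0 C phi e -> aeval e (penalized_sup C phi t) <= at0 e p.
Proof.
move=> hL; apply: aeval_asup_le => // y /=; rewrite t_val.
by have := hL y p; rewrite ler_norml => /andP[_ h]; lra.
Qed.

End PenalizedExtrema.

Lemma aeval_succ_increment_summand (e : nat -> M) :
  let z := tvar (fresh_var phi) in
  aeval e (aplus (penalized_inf C phi (tadd z tone)) (ascale (-1) (penalized_sup C phi z))) =
  aeval e (penalized_inf C phi (tadd z tone)) - aeval e (penalized_sup C phi z).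
Proof. by rewrite /= mulN1r. Qed.

Lemma succ_increment_le (e : nat -> M) b : (forall x : M, dist M x x = 0) ->
  (forall z, at0 e (ladd M z (lone M)) - at0 e z <= b) ->
  aeval e (succ_increment C phi) <= b.
Proof.
move=> dxx hb; apply: aeval_asup_le => // z; rewrite aeval_succ_increment_summand.
have h1 := @penalized_inf_le _ (tadd (tvar (fresh_var phi)) tone) (ladd M z (lone M))
  (fun y => congr2 _ (upd_fresh_var e phi z y) erefl) (dxx _).
have h2 := @le_penalized_sup _ (tvar (fresh_var phi)) z (upd_fresh_var e phi z) (dxx z).
rewrite !aeval_fresh_var in h1 h2.
by have := hb z; lra.
Qed.

Lemma le_succ_increment (e : nat -> M) z : lipschitz_at0 C phi e ->
  at0 e (ladd M z (lone M)) - at0 e z <= aeval e (succ_increment C phi).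
Proof.
move=> hL; apply: le_trans (aeval_asup_ge M_inhabited dist_01 e (fresh_var phi) _ z).
rewrite aeval_succ_increment_summand.
have hL' : lipschitz_at0 C phi (upd e (fresh_var phi) z).
  by move=> x y; rewrite !aeval_fresh_var.
have h1 := @lipschitz_penalized_inf_ge _ (tadd (tvar (fresh_var phi)) tone) (ladd M z (lone M))
  (fun y => congr2 _ (upd_fresh_var e phi z y) erefl) hL'.
have h2 := @lipschitz_penalized_sup_le _ (tvar (fresh_var phi)) z (upd_fresh_var e phi z) hL'.
rewrite !aeval_fresh_var in h1 h2.
lra.
Qed.

Lemma induction_form_nonincreasing (e : nat -> M) K : (forall x : M, dist M x x = 0) ->
  0 <= K -> 0 <= aeval e (induction_form C K phi) ->
  (forall x, at0 e (ladd M x (lone M)) <= at0 e x) ->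
  forall x, at0 e x <= at0 e (lzero M).
Proof.
move=> dxx K_ge0 hform hdec x.
have hD : aeval e (succ_increment C phi) <= 0.
  by apply: succ_increment_le => // z; rewrite subr_le0.
have h0 := @penalized_inf_le e tzero (lzero M) (fun=> erefl) (dxx _).
have hx := aeval_asup_ge M_inhabited dist_01 e 0 phi x.
have hKD : K * aeval e (succ_increment C phi) <= 0 by rewrite mulr_ge0_le0.
move: hform; rewrite aeval_induction_form; lra.
Qed.

Lemma lipschitz_induction_form_ge0 (e : nat -> M) K z :
  lipschitz_at0 C phi e -> 0 <= K ->
  (forall x, at0 e x - at0 e (lzero M) <= K * (at0 e (ladd M z (lone M)) - at0 e z)) ->
  0 <= aeval e (induction_form C K phi).
Proof.
move=> hL K_ge0 hz.
have h0 := @lipschitz_penalized_inf_ge e tzero (lzero M) (fun=> erefl) hL.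
have hKD : K * (at0 e (ladd M z (lone M)) - at0 e z) <= K * aeval e (succ_increment C phi).
  by apply: ler_wpM2l => //; apply: le_succ_increment.
have hsup : aeval e (asup 0 phi) <= at0 e (lzero M) + K * aeval e (succ_increment C phi).
  by apply: aeval_asup_le => // x; have := hz x; lra.
rewrite aeval_induction_form; lra.
Qed.

End InductionForm.

Section FiniteRange.
Variables (T : Type) (g : T -> real).

Lemma exists_max_dominated (l : seq real) y1 :
  (forall y, g y \in l \/ g y <= g y1) -> exists y0, forall y, g y <= g y0.
Proof.
elim: l y1 => [|v l IH] y1 h; first by exists y1 => y; case: (h y).
have [[y2 [gy2 le_y1]]|nv] := classic (exists y2, g y2 = v /\ g y1 <= v).
  apply: (IH y2) => y; case: (h y) => [|hy]; last by right; rewrite gy2 (le_trans hy).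
  by rewrite in_cons gy2 => /orP[/eqP ->|]; [right|left].
apply: (IH y1) => y; case: (h y) => [|hy]; last by right.
rewrite in_cons => /orP[/eqP hyv|]; last by left.
by right; rewrite leNgt; apply/negP => lt_y1; apply: nv; exists y; rewrite -hyv ltW.
Qed.

Lemma finite_range_max (l : seq real) : inhabited T ->
  (forall y, g y \in l) -> exists y0, forall y, g y <= g y0.
Proof. by move=> [y1] h; apply: (@exists_max_dominated l y1) => y; left. Qed.

End FiniteRange.

Lemma finite_range_min (T : Type) (g : T -> real) (l : seq real) : inhabited T ->
  (forall y, g y \in l) -> exists y0, forall y, g y0 <= g y.
Proof.
move=> inh h; have [y0 hy0] := @finite_range_max _ (fun y => - g y) (map -%R l) inh
  (fun y => map_f _ (h y)).
by exists y0 => y; have := hy0 y; rewrite lerN2.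
Qed.

Lemma sup_range_finite (T : Type) (g : T -> real) (l : seq real) v :
  inhabited T -> (forall y, g y \in l) ->
  sup (range g) = v <->
  (exists x, g x = v) /\ ~ exists2 w, w \in [seq w <- l | v < w] & exists x, g x = w.
Proof.
move=> inh gl; split.
  have [y0 hy0] := finite_range_max inh gl; rewrite (sup_range_max hy0) => <-.
  split=> [|[w]]; first by exists y0.
  by rewrite mem_filter => /andP[lt_w _] [x gx]; move: (hy0 x); rewrite gx leNgt lt_w.
case=> -[x gx] nw; rewrite (@sup_range_max _ g x) // => y; rewrite gx leNgt.
by apply/negP => lt_y; apply: nw; exists (g y); [rewrite mem_filter lt_y gl|exists y].
Qed.

Lemma inf_range_finite (T : Type) (g : T -> real) (l : seq real) v :
  inhabited T -> (forall y, g y \in l) ->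
  inf (range g) = v <->
  (exists x, g x = v) /\ ~ exists2 w, w \in [seq w <- l | w < v] & exists x, g x = w.
Proof.
move=> inh gl; split.
  have [y0 hy0] := finite_range_min inh gl; rewrite (inf_range_min hy0) => <-.
  split=> [|[w]]; first by exists y0.
  by rewrite mem_filter => /andP[lt_w _] [x gx]; move: (hy0 x); rewrite gx leNgt lt_w.
case=> -[x gx] nw; rewrite (@inf_range_min _ g x) // => y; rewrite gx leNgt.
by apply/negP => lt_y; apply: nw; exists (g y); [rewrite mem_filter lt_y gl|exists y].
Qed.

Lemma norm_le_sum_abs (l : seq real) v : v \in l -> `|v| <= \sum_(w <- l) `|w|.
Proof.
elim: l => [|w l IH] //; rewrite big_cons in_cons => /orP[/eqP ->|/IH h].
  by rewrite lerDl sumr_ge0.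
by rewrite ler_wpDl.
Qed.

Lemma exists_min_dist_to (x : real) (l : seq real) : exists2 d : real, 0 < d &
  forall w, w \in l -> w != x -> d <= `|w - x|.
Proof.
elim: l => [|y l [d d_gt0 IH]]; first by exists 1.
have [->|yx] := eqVneq y x.
  by exists d => // w; rewrite in_cons => /orP[/eqP ->|]; [rewrite eqxx|apply: IH].
exists (Order.min d `|y - x|); first by rewrite lt_min d_gt0 normr_gt0 subr_eq0 yx.
move=> w; rewrite in_cons ge_min => /orP[/eqP ->|hw] hwx; first by rewrite lexx orbT.
by rewrite IH.
Qed.

Lemma exists_min_gap (l : seq real) : exists2 d : real, 0 < d &
  forall v w, v \in l -> w \in l -> v < w -> d <= w - v.
Proof.
elim: l => [|x l [d1 d1_gt0 IH]]; first by exists 1.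
have [dx dx_gt0 hx] := exists_min_dist_to x l.
exists (Order.min d1 dx); first by rewrite lt_min d1_gt0 dx_gt0.
move=> v w; rewrite !in_cons ge_min => /orP[/eqP ->|hv] /orP[/eqP ->|hw] hlt.
- by rewrite ltxx in hlt.
- have := hx w hw (negbT (gt_eqF hlt)).
  by rewrite ger0_norm ?subr_ge0 ?(ltW hlt) // => ->; rewrite orbT.
- have := hx v hv (negbT (lt_eqF hlt)).
  by rewrite ler0_norm ?subr_le0 ?(ltW hlt) // opprB => ->; rewrite orbT.
- by rewrite IH.
Qed.

(** * Affine formulas in models of PA *)

Definition f_true : foform := feq pz pz.
Definition f_false : foform := fnot f_true.
Definition f_or (f g : foform) : foform := fnot (fand (fnot f) (fnot g)).
Definition f_bool (b : bool) : foform := if b then f_true else f_false.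
Definition f_bigor (l : seq foform) : foform := foldr f_or f_false l.
Definition f_le (i j s : nat) : foform := fex s (feq (pplus (pvar i) (pvar s)) (pvar j)).

(* Variable k holds the value of t; variables m, m+1, ... are scratch. *)
Fixpoint term_graph (t : term) (k m : nat) : foform :=
  let binop t1 t2 G := fex m (fex m.+1
    (fand (term_graph t1 m m.+2) (fand (term_graph t2 m.+1 m.+2) G))) in
  match t with
  | tvar n => feq (pvar k) (pvar n)
  | tzero => feq (pvar k) pz
  | tone => feq (pvar k) po
  | tadd t1 t2 => binop t1 t2 (feq (pvar k) (pplus (pvar m) (pvar m.+1)))
  | tmul t1 t2 => binop t1 t2 (feq (pvar k) (ptimes (pvar m) (pvar m.+1)))
  | tmeet t1 t2 => binop t1 t2
      (f_or (fand (f_le m m.+1 m.+2) (feq (pvar k) (pvar m)))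
            (fand (fnot (f_le m m.+1 m.+2)) (feq (pvar k) (pvar m.+1))))
  | tjoin t1 t2 => binop t1 t2
      (f_or (fand (f_le m m.+1 m.+2) (feq (pvar k) (pvar m.+1)))
            (fand (fnot (f_le m m.+1 m.+2)) (feq (pvar k) (pvar m))))
  end.

Definition term_eq (t1 t2 : term) (m : nat) : foform :=
  fex m (fex m.+1
    (fand (term_graph t1 m m.+2) (fand (term_graph t2 m.+1 m.+2) (feq (pvar m) (pvar m.+1))))).

(* Contains every value of f in a structure whose metric takes only the values 0 and 1. *)
Fixpoint aform_values (f : aform) : seq real :=
  match f with
  | aone => [:: 1]
  | adist _ _ => [:: 0; 1]
  | aplus f1 f2 => [seq v1 + v2 | v1 <- aform_values f1, v2 <- aform_values f2]
  | ascale r f1 => [seq r * v | v <- aform_values f1]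
  | asup _ f1 | ainf _ f1 => aform_values f1
  end.

(* A first-order formula expressing [f = v] in models of PA (scratch variables from m);
   extrema are expressed through the finitely many candidate values. *)
Fixpoint aform_level (f : aform) (v : real) (m : nat) : foform :=
  let vals := aform_values in
  match f with
  | aone => f_bool (v == 1)
  | adist t1 t2 => f_or (fand (f_bool (v == 0)) (term_eq t1 t2 m))
                        (fand (f_bool (v == 1)) (fnot (term_eq t1 t2 m)))
  | aplus f1 f2 =>
      f_bigor [seq fand (aform_level f1 v1 m) (aform_level f2 (v - v1) m) | v1 <- vals f1]
  | ascale r f1 =>
      f_bigor [seq fand (f_bool (r * v1 == v)) (aform_level f1 v1 m) | v1 <- vals f1]
  | asup n f1 => fand (fex n (aform_level f1 v m))
      (fnot (f_bigor [seq fex n (aform_level f1 w m) | w <- vals f1 & v < w]))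
  | ainf n f1 => fand (fex n (aform_level f1 v m))
      (fnot (f_bigor [seq fex n (aform_level f1 w m) | w <- vals f1 & w < v]))
  end.

Ltac upd_simpl := rewrite /upd; repeat (case: eqP => ?; try (exfalso; lia)).

Section PAsemantics.
Variable N : PAstr.
Local Notation L := (PA_to_L N).

Lemma PA_inhabited : inhabited L.
Proof. exact: inhabits (pzero N). Qed.

Lemma PA_dist_01 (x y : L) : 0 <= dist L x y <= 1.
Proof. by rewrite /=; case: pselect; rewrite /= ?lexx ?ler01. Qed.

Lemma fosat_or (a : nat -> N) f g : fosat a (f_or f g) <-> fosat a f \/ fosat a g.
Proof.
split=> [|[hf|hg] [nf ng]] //=.
by move=> h; apply: NNPP => /not_or_and.
Qed.

Lemma fosat_bool (a : nat -> N) b : fosat a (f_bool b) <-> b.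
Proof. by case: b; split=> //= /(_ erefl). Qed.

Lemma fosat_bigor (T : eqType) (a : nat -> N) (F : T -> foform) s :
  fosat a (f_bigor [seq F x | x <- s]) <-> exists2 x, x \in s & fosat a (F x).
Proof.
elim: s => [|x s IH]; first by split=> [/(_ erefl)|[]].
rewrite [f_bigor _]/= fosat_or IH; split=> [[hx|[y ys hy]]|[y]].
- by exists x; rewrite ?mem_head.
- by exists y; rewrite // in_cons ys orbT.
- by rewrite in_cons => /orP[/eqP->|ys hy]; [left|right; exists y].
Qed.

Lemma fosat_le (a : nat -> N) i j s : (i < s)%N -> (j < s)%N ->
  fosat a (f_le i j s) <-> pa_le (a i) (a j).
Proof. by move=> hi hj; split=> -[z hz]; exists z; move: hz => /=; upd_simpl. Qed.

Lemma fosat_binop (P : N -> N -> Prop) t1 t2 m (a : nat -> N) G :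
  (tvar_bound t1 <= m)%N -> (tvar_bound t2 <= m)%N ->
  (forall a, fosat a (term_graph t1 m m.+2) <-> a m = @teval L a t1) ->
  (forall a, fosat a (term_graph t2 m.+1 m.+2) <-> a m.+1 = @teval L a t2) ->
  (forall x1 x2, fosat (upd (upd a m x1) m.+1 x2) G <-> P x1 x2) ->
  fosat a (fex m (fex m.+1
    (fand (term_graph t1 m m.+2) (fand (term_graph t2 m.+1 m.+2) G)))) <->
  P (@teval L a t1) (@teval L a t2).
Proof.
move=> h1 h2 IH1 IH2 hG /=.
have E1 x1 x2 : fosat (upd (upd a m x1) m.+1 x2) (term_graph t1 m m.+2) <->
    x1 = @teval L a t1.
  by rewrite IH1 upd_neq ?upd_eq ?teval_upd_fresh //; lia.
have E2 x1 x2 : fosat (upd (upd a m x1) m.+1 x2) (term_graph t2 m.+1 m.+2) <->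
    x2 = @teval L a t2.
  by rewrite IH2 upd_eq !teval_upd_fresh //; lia.
split; first by move=> [x1 [x2 [/E1 -> [/E2 -> /hG]]]].
by move=> hP; exists (@teval L a t1), (@teval L a t2); rewrite E1 E2 hG.
Qed.

Lemma fosat_term_graph t k m (a : nat -> N) : (tvar_bound t <= m)%N -> (k < m)%N ->
  fosat a (term_graph t k m) <-> a k = @teval L a t.
Proof.
elim: t k m a => [n|||t1 IH1 t2 IH2|t1 IH1 t2 IH2|t1 IH1 t2 IH2|t1 IH1 t2 IH2] k m a;
  try by []; rewrite [tvar_bound _]/= geq_max => /andP[h1 h2] hk.
- apply: (fosat_binop (P := fun x1 x2 => a k = padd N x1 x2)) => // [b|b|x1 x2];
    [apply: IH1; lia|apply: IH2; lia|by rewrite /=; upd_simpl].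
- apply: (fosat_binop (P := fun x1 x2 => a k = pmul N x1 x2)) => // [b|b|x1 x2];
    [apply: IH1; lia|apply: IH2; lia|by rewrite /=; upd_simpl].
- apply: (fosat_binop (P := fun x1 x2 => a k = if pselect (pa_le x1 x2) then x1 else x2))
    => // [b|b|x1 x2]; [apply: IH1; lia|apply: IH2; lia|].
  rewrite fosat_or; cbn [fosat]; rewrite !fosat_le; try lia.
  by cbn [pteval]; upd_simpl; case: pselect => hle /=; tauto.
- apply: (fosat_binop (P := fun x1 x2 => a k = if pselect (pa_le x1 x2) then x2 else x1))
    => // [b|b|x1 x2]; [apply: IH1; lia|apply: IH2; lia|].
  rewrite fosat_or; cbn [fosat]; rewrite !fosat_le; try lia.
  by cbn [pteval]; upd_simpl; case: pselect => hle /=; tauto.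
Qed.

Lemma fosat_term_eq (a : nat -> N) t1 t2 m :
  (tvar_bound t1 <= m)%N -> (tvar_bound t2 <= m)%N ->
  fosat a (term_eq t1 t2 m) <-> @teval L a t1 = @teval L a t2.
Proof.
move=> h1 h2; apply: (fosat_binop (P := fun x1 x2 => x1 = x2)) => // [b|b|x1 x2].
- by apply: fosat_term_graph => //; lia.
- by apply: fosat_term_graph => //; lia.
- by rewrite /=; upd_simpl.
Qed.

Lemma aeval_in_values f (a : nat -> L) : aeval a f \in aform_values f.
Proof.
elim: f a => [|t1 t2|f1 IH1 f2 IH2|r f1 IH1|n f1 IH1|n f1 IH1] a /=.
- by rewrite mem_seq1.
- by case: pselect => hh; rewrite !inE eqxx ?orbT.
- exact: allpairs_f.
- exact: map_f.
- have [y0 hy0] := finite_range_max PA_inhabited (fun y => IH1 (upd a n y)).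
  by rewrite (sup_range_max hy0).
- have [y0 hy0] := finite_range_min PA_inhabited (fun y => IH1 (upd a n y)).
  by rewrite (inf_range_min hy0).
Qed.

Lemma fosat_aform_level f m : (avar_bound f <= m)%N -> forall (a : nat -> N) v,
  fosat a (aform_level f v m) <-> @aeval L a f = v.
Proof.
elim: f => [|t1 t2|f1 IH1 f2 IH2|r f1 IH1|n f1 IH1|n f1 IH1];
  cbn [avar_bound aform_level aeval]; rewrite ?geq_max.
- by move=> _ a v; rewrite fosat_bool; split => [/eqP ->|<-].
- case/andP=> h1 h2 a v; rewrite fosat_or; cbn [fosat].
  rewrite !fosat_bool fosat_term_eq //.
  cbn [dist PA_to_L]; case: pselect => he; split.
  + by case=> -[/eqP -> _] //.
  + by move=> <-; left.
  + by case=> -[/eqP -> h] //.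
  + by move=> <-; right.
- case/andP=> h1 h2 a v; rewrite fosat_bigor; split=> [[v1 _ /= [/IH1 -> // /IH2 -> //]]|<-].
    by rewrite addrC subrK.
  exists (@aeval L a f1); first exact: aeval_in_values.
  by split; [apply/IH1|apply/IH2] => //; rewrite addrAC subrr add0r.
- move=> hm a v; rewrite fosat_bigor; split=> [[v1 _ /= [/fosat_bool/eqP <- /IH1 -> //]]|<-].
  exists (@aeval L a f1); first exact: aeval_in_values.
  by split; [apply/fosat_bool|apply/IH1].
- case/andP=> _ /IH1 {}IH1 a v; cbn [fosat]; rewrite fosat_bigor.
  rewrite (sup_range_finite _ PA_inhabited (fun y => aeval_in_values f1 (upd a n y))).
  have lvl w : (exists x, fosat (upd a n x) (aform_level f1 w m)) <->
      exists x, @aeval L (upd a n x) f1 = w by split=> -[x hx]; exists x; apply/IH1.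
  by split=> -[/lvl hv nw]; split=> // -[w wl /lvl hw]; apply: nw; exists w.
- case/andP=> _ /IH1 {}IH1 a v; cbn [fosat]; rewrite fosat_bigor.
  rewrite (inf_range_finite _ PA_inhabited (fun y => aeval_in_values f1 (upd a n y))).
  have lvl w : (exists x, fosat (upd a n x) (aform_level f1 w m)) <->
      exists x, @aeval L (upd a n x) f1 = w by split=> -[x hx]; exists x; apply/IH1.
  by split=> -[/lvl hv nw]; split=> // -[w wl /lvl hw]; apply: nw; exists w.
Qed.

End PAsemantics.

Definition values_bound (phi : aform) : real := \sum_(v <- aform_values phi) `|v|.

Section PAinduction.
Variables (N : PAstr) (HN : is_PA N).
Local Notation L := (PA_to_L N).
Local Notation succ x := (padd N x (pone N)).

Lemma PA_aeval_ind_le phi (e : nat -> L) c :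
  aeval (upd e 0 (pzero N)) phi <= c ->
  (forall x, aeval (upd e 0 x) phi <= c -> aeval (upd e 0 (succ x)) phi <= c) ->
  forall x, aeval (upd e 0 x) phi <= c.
Proof.
move=> h0 hS.
pose P := f_bigor [seq aform_level phi v (avar_bound phi) | v <- aform_values phi & v <= c].
have hP x : fosat (upd e 0 x) P <-> aeval (upd e 0 x) phi <= c.
  rewrite fosat_bigor; split=> [[v]|le_c].
    by rewrite mem_filter => /andP[le_vc _] /fosat_aform_level ->.
  exists (aeval (upd e 0 x) phi); first by rewrite mem_filter le_c aeval_in_values.
  exact/fosat_aform_level.
by move=> x; apply/hP; apply: (pa_ind HN) => [|y /hP /hS /hP]; first exact/hP.
Qed.

Lemma PA_lipschitz_at0 phi (e : nat -> L) :
  lipschitz_at0 (2 * values_bound phi) phi e.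
Proof.
move=> x y; rewrite /= /values_bound; case: pselect => [xy|_] /=.
  by rewrite xy subrr normr0 mulr0.
apply: le_trans (ler_normB _ _) _.
have := norm_le_sum_abs (aeval_in_values phi (upd e 0 x)).
have := norm_le_sum_abs (aeval_in_values phi (upd e 0 y)).
lra.
Qed.

Lemma PA_induction_form_ge0 phi d : 0 < d ->
  (forall v w, v \in aform_values phi -> w \in aform_values phi -> v < w -> d <= w - v) ->
  forall e : nat -> L,
  0 <= aeval e (induction_form (2 * values_bound phi) (2 * values_bound phi / d) phi).
Proof.
move=> d_gt0 gap e; set B := values_bound phi; pose f x := aeval (upd e 0 x) phi.
have fB x : `|f x| <= B by apply/norm_le_sum_abs/aeval_in_values.
have K_ge0 : 0 <= 2 * B / d.
  by rewrite divr_ge0 ?(ltW d_gt0) // mulr_ge0 // (le_trans _ (fB (pzero N))).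
have hosc x : f x - f (pzero N) <= 2 * B.
  by have := fB x; have := fB (pzero N); rewrite !ler_norml; lra.
have [[z lt_z]|] := classic (exists z, f z < f (succ z)).
  apply: (lipschitz_induction_form_ge0 (PA_inhabited N) (@PA_dist_01 N) (z := z)) => //.
    exact: PA_lipschitz_at0.
  move=> x; apply: le_trans (hosc x) _.
  rewrite -{1}(divfK (lt0r_neq0 d_gt0) (2 * B)); apply: ler_wpM2l => //.
  exact: gap (aeval_in_values phi _) (aeval_in_values phi _) lt_z.
move=> nincr.
have f_dec x : f (succ x) <= f x.
  by rewrite leNgt; apply/negP => lt_x; apply: nincr; exists x.
have le_f0 := PA_aeval_ind_le (lexx (f (pzero N))) (fun x fx => le_trans (f_dec x) fx).
(* The increment at a minimum point of f is nonnegative. *)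
have [zm f_zm] := finite_range_min (PA_inhabited N) (fun y => aeval_in_values phi (upd e 0 y)).
apply: (lipschitz_induction_form_ge0 (PA_inhabited N) (@PA_dist_01 N) (z := zm)) => //.
  exact: PA_lipschitz_at0.
move=> x; apply: le_trans (mulr_ge0 K_ge0 _); first by rewrite subr_le0 le_f0.
by rewrite subr_ge0 f_zm.
Qed.

End PAinduction.

Lemma AA_inf_closure n g : (avar_bound g <= n)%N ->
  (forall N : PAstr, is_PA N -> forall e : nat -> PA_to_L N, 0 <= aeval e g) ->
  AA (inf_closure n g).
Proof.
move=> g_n g_PA; split; first exact: closed_inf_closure.
by move=> N HN; apply: (inf_closure_ge0 (PA_inhabited N)); apply: g_PA.
Qed.

Lemma AA_induction_axiom phi : exists C K, 0 <= K /\ AA (induction_axiom C K phi).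
Proof.
have [d d_gt0 gap] := exists_min_gap (aform_values phi).
exists (2 * values_bound phi), (2 * values_bound phi / d); split.
  by rewrite divr_ge0 ?(ltW d_gt0) // mulr_ge0 // sumr_ge0.
apply: AA_inf_closure; first by rewrite /induction_form /succ_increment /penalized_inf
  /penalized_sup /fresh_var /=; lia.
by move=> N HN; apply: PA_induction_form_ge0.
Qed.

Section PAarithmetic.
Variables (N : PAstr) (HN : is_PA N).

Lemma PA_add0l x : padd N (pzero N) x = x.
Proof.
have ind := @pa_ind _ HN (feq (pplus pz (pvar 0)) (pvar 0)) 0 (fun=> pzero N).
apply: ind => /= [|y].
  exact: pa_add0.
by rewrite (pa_addS HN) => ->.
Qed.

Lemma PA_add1l x : padd N (pone N) x = padd N x (pone N).
Proof.
have ind := @pa_ind _ HN (feq (pplus po (pvar 0)) (pplus (pvar 0) po)) 0 (fun=> pzero N).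
apply: ind => /= [|y].
  by rewrite (pa_add0 HN) PA_add0l.
by rewrite (pa_addS HN) => ->.
Qed.

Lemma PA_le0x (x : N) : pa_le (pzero N) x.
Proof. by exists x; rewrite PA_add0l. Qed.

End PAarithmetic.

(* 0 /\ x = 0 *)
Definition meet0_form : aform := ascale (-1) (adist (tmeet tzero (tvar 0)) tzero).

(* d(x, y) <= d(x + 1, y + 1) *)
Definition succ_dist_form : aform :=
  aplus (adist (tadd (tvar 0) tone) (tadd (tvar 1) tone)) (ascale (-1) (adist (tvar 0) (tvar 1))).

(* 1 <= x -> inf_y d(y + 1, x) = 0 *)
Definition pred_form : aform :=
  aplus (adist (tmeet tone (tvar 0)) tone)
        (ascale (-1) (ainf 1 (adist (tadd (tvar 1) tone) (tvar 0)))).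

Lemma AA_meet0_form : AA (inf_closure 1 meet0_form).
Proof.
apply: AA_inf_closure => // N HN e /=.
case: pselect => [le0|/(_ (PA_le0x HN (e 0)))//] /=.
by case: pselect => [eq0|//]; rewrite mulr0.
Qed.

Lemma AA_succ_dist_form : AA (inf_closure 2 succ_dist_form).
Proof.
apply: AA_inf_closure => // N HN e /=.
case: pselect => [eq1|ne1]; case: pselect => [eq0|ne0] /=; try lra.
by case: ne0; apply: (pa_succ_inj HN).
Qed.

Lemma AA_pred_form : AA (inf_closure 2 pred_form).
Proof.
apply: AA_inf_closure => // N HN e.
pose g := adist (tadd (tvar 1) tone) (tvar 0).
have inf_le := aeval_ainf_le (PA_inhabited N) (@PA_dist_01 N) e 1 g.
have -> : aeval e pred_form = aeval e (adist (tmeet tone (tvar 0)) tone) - aeval e (ainf 1 g).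
  by rewrite /= mulN1r.
rewrite subr_ge0; case: (pselect (pa_le (pone N) (e 0))) => [[w hw]|nle].
  apply: le_trans (inf_le w) _; rewrite /= upd_eq upd_neq // -hw (PA_add1l HN).
  by case: pselect => [eq1|//]; case: pselect => h1; case: pselect => h2 /=; rewrite ?ler01.
apply: le_trans (inf_le (e 0)) _.
apply: le_trans (andP (@PA_dist_01 N _ _)).2 _.
rewrite /=; case: pselect => [//|_] /=; case: pselect => [e0_1|//] /=.
by case: nle; rewrite e0_1; exists (pzero N); apply: pa_add0.
Qed.

(** * Models of AA *)

Lemma inv_succ_lt_eventually (e : real) : 0 < e ->
  exists n0, forall n, (n0 <= n)%N -> n.+1%:R^-1 < e.
Proof.
move=> e_gt0; exists (Num.Def.archi_bound e^-1) => n n0_n.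
rewrite invf_plt ?posrE ?ltr0Sn //.
have einv_ge0 : 0 <= e^-1 by rewrite invr_ge0 ltW.
by apply: lt_le_trans (archi_boundP einv_ge0) _; rewrite ler_nat ltnW.
Qed.

Section AAmodel.
Variables (M : Lpre) (HM : Lstruct_axioms M) (HAA : models_AA M).
Local Notation succ x := (ladd M x (lone M)).

Let M_inhabited : inhabited M := ax_inhabited HM.

Lemma dist_01 (x y : M) : 0 <= dist M x y <= 1.
Proof. by rewrite (ax_dist_ge0 HM) (ax_dist_le1 HM). Qed.

Lemma dist_xx (x : M) : dist M x x = 0.
Proof. exact/(ax_dist_eq0 HM). Qed.

Lemma AA_ge0 n g : AA (inf_closure n g) -> forall e : nat -> M, 0 <= aeval e g.
Proof.
by move=> AAg; apply: (ge0_of_inf_closure M_inhabited dist_01 (n := n)) => e; apply: HAA.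
Qed.

Lemma Lle0x (x : M) : Lle (lzero M) x.
Proof.
have := AA_ge0 AA_meet0_form (fun=> x); rewrite /= mulN1r oppr_ge0 => le0.
by apply/(ax_dist_eq0 HM)/le_anti; rewrite le0 (ax_dist_ge0 HM).
Qed.

Lemma dist_succ_le (x y : M) : dist M (succ x) (succ y) <= dist M x y.
Proof.
apply: le_trans (ax_lip_add HM x (lone M) y (lone M)) _.
by rewrite ge_max lexx dist_xx (ax_dist_ge0 HM).
Qed.

Lemma dist_le_succ (x y : M) : dist M x y <= dist M (succ x) (succ y).
Proof.
by have := AA_ge0 AA_succ_dist_form (fun k => if k == 0%N then x else y); rewrite /=; lra.
Qed.

Lemma approx_pred (y : M) : Lle (lone M) y -> forall e : real, 0 < e ->
  exists z, dist M (succ z) y < e.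
Proof.
move=> le1y e e_gt0.
have := AA_ge0 AA_pred_form (fun=> y); rewrite /= le1y dist_xx add0r mulN1r oppr_ge0.
move=> /le_lt_trans /(_ e_gt0) /(inf_lt (ex_intro _ _ (ex_intro2 _ _ (lzero M) I erefl))).
by case=> _ [z _ <-]; exists z.
Qed.

Lemma exists_pred (y : M) : Lle (lone M) y -> exists z, succ z = y.
Proof.
move=> le1y; have inv_gt0 n : 0 < n.+1%:R^-1 :> real by rewrite invr_gt0 ltr0Sn.
have [u hu] := choice (fun n => approx_pred le1y (inv_gt0 n)).
(* Approximate predecessors form a Cauchy sequence since the successor does not shrink
   distances. *)
have u_cauchy : cauchy u.
  move=> e e_gt0; have [n0 hn0] : exists n0, forall n, (n0 <= n)%N -> n.+1%:R^-1 < e / 2.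
    by apply: inv_succ_lt_eventually; lra.
  exists n0 => n m n0n n0m; apply: le_lt_trans (dist_le_succ _ _) _.
  apply: le_lt_trans (ax_dist_tri HM _ y _) _; rewrite (ax_dist_sym HM y).
  apply: lt_le_trans (ltrD (lt_trans (hu n) (hn0 n n0n)) (lt_trans (hu m) (hn0 m n0m))) _.
  lra.
have [z uz] := ax_complete HM u_cauchy.
exists z; apply/(ax_dist_eq0 HM)/le_anti; rewrite (ax_dist_ge0 HM) andbT.
apply/ler_addgt0Pr => e e_gt0; rewrite add0r.
have e2_gt0 : 0 < e / 2 by lra.
have [n1 hn1] := uz _ e2_gt0.
have [n2 hn2] := inv_succ_lt_eventually e2_gt0.
pose n := maxn n1 n2; have := hn1 n (leq_maxl _ _).
have := lt_trans (hu n) (hn2 n (leq_maxr _ _)).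
have := dist_succ_le z (u n); rewrite (ax_dist_sym HM z).
have := ax_dist_tri HM (succ z) (succ (u n)) y; rewrite (ax_dist_sym HM (succ z)).
lra.
Qed.

Lemma AA_nonincreasing_le phi (e : nat -> M) :
  (forall x, aeval (upd e 0 (succ x)) phi <= aeval (upd e 0 x) phi) ->
  forall x, aeval (upd e 0 x) phi <= aeval (upd e 0 (lzero M)) phi.
Proof.
have [C [K [K_ge0 AA_ind]]] := AA_induction_axiom phi.
apply: (@induction_form_nonincreasing _ M_inhabited dist_01 C phi e K) => //.
  exact: dist_xx.
exact: AA_ge0 AA_ind e.
Qed.

Lemma dist_to_set_le (D : set M) x y : D y -> dist_to_set x D <= dist M x y.
Proof.
by move=> Dy; apply: ge_inf; [exists 0 => _ [z _ <-]; apply: (ax_dist_ge0 HM)|exists y].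
Qed.

Lemma le_dist_to_set (D : set M) x c : D !=set0 ->
  (forall y, D y -> c <= dist M x y) -> c <= dist_to_set x D.
Proof.
by move=> [y Dy] h; apply: lb_le_inf; [exists (dist M x y), y|move=> _ [z Dz <-]; apply: h].
Qed.

Lemma dist_to_set_le0 (D : set M) x : metric_closed D -> D !=set0 ->
  dist_to_set x D <= 0 -> D x.
Proof.
move=> D_closed [y0 Dy0] le0; apply: D_closed => e e_gt0.
have Dn0 : [set dist M x y | y in D] !=set0 by exists (dist M x y0), y0.
by have [_ [y Dy <-] lt_e] := inf_lt Dn0 (le_lt_trans le0 e_gt0); exists y.
Qed.

Lemma dist_to_set_succ_le (D : set M) x : D !=set0 ->
  (forall y, D y -> D (succ y)) -> dist_to_set (succ x) D <= dist_to_set x D.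
Proof.
move=> D0 D_succ; apply: le_dist_to_set => // y Dy.
exact: le_trans (dist_to_set_le _ (D_succ y Dy)) (dist_succ_le x y).
Qed.

Lemma dist_to_set_le_succ (D : set M) x : D !=set0 ->
  (forall y, D y -> exists2 z, D z & succ z = y) -> dist_to_set x D <= dist_to_set (succ x) D.
Proof.
move=> D0 D_pred; apply: le_dist_to_set => // _ /D_pred [z Dz <-].
exact: le_trans (dist_to_set_le _ Dz) (dist_le_succ x z).
Qed.

Lemma definable_succ_closed (D : set M) : formula_definable D ->
  D (lzero M) -> (forall y, D y -> D (succ y)) -> D = setT.
Proof.
move=> [D_closed [phi [a dD]]] D0 D_succ; have Dn0 : D !=set0 by exists (lzero M).
have le_0 x : dist_to_set x D <= dist_to_set (lzero M) D.
  by rewrite !dD; apply: AA_nonincreasing_le => y; rewrite -!dD; apply: dist_to_set_succ_le.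
apply/seteqP; split=> // x _; apply: dist_to_set_le0 => //.
by apply: le_trans (le_0 x) _; apply: le_trans (dist_to_set_le _ D0) _; rewrite dist_xx.
Qed.

Lemma definable_pred_closed (D : set M) : formula_definable D -> D !=set0 ->
  (forall y, D y -> exists2 z, D z & succ z = y) -> D (lzero M).
Proof.
move=> [D_closed [phi [a dD]]] [b Db] D_pred; have Dn0 : D !=set0 by exists b.
have dec y : aeval (upd a 0 (succ y)) (ascale (-1) phi) <= aeval (upd a 0 y) (ascale (-1) phi).
  by rewrite /= !mulN1r lerN2 -!dD; apply: dist_to_set_le_succ.
have le_x x : dist_to_set (lzero M) D <= dist_to_set x D.
  by have := AA_nonincreasing_le dec x; rewrite /= !mulN1r lerN2 -!dD.
apply: dist_to_set_le0 => //.
by apply: le_trans (le_x b) _; apply: le_trans (dist_to_set_le _ Db) _; rewrite dist_xx.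
Qed.

End AAmodel.

Theorem mainTheorem5 (M : Lpre) (HM : Lstruct_axioms M) (HAA : models_AA M)
  (I : set M) (HI : proper_cut I) :
  ~ formula_definable I /\
  ((forall y : M, ~ I y -> Lle (lone M) y) -> ~ formula_definable (~` I)).
Proof.
case: HI => [[[i Ii] [I_down I_succ]] I_proper].
have I0 : I (lzero M) by apply: I_down (Lle0x HM HAA i) Ii.
have [b Ib] : exists b, ~ I b.
  apply: NNPP => allI; move/eqP: I_proper; apply; apply/seteqP; split=> // x _.
  by apply: NNPP => Ix; apply: allI; exists x.
split=> [I_def|ge1 IC_def].
  by apply: Ib; rewrite (definable_succ_closed HM HAA I_def I0 I_succ).
apply: (definable_pred_closed HM HAA IC_def) I0; first by exists b.
move=> y Iy; have [z zy] := exists_pred HM HAA (ge1 y Iy).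
by exists z => // Iz; apply: Iy; rewrite -zy; apply: I_succ.
Qed.
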